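(* Let $S \geq 1$ and, for $i = 1,\dots,S$, let $\boldsymbol{M}_i \in \mathbb{R}^{m_i \times m_i}$ be symmetric positive definite, let $\boldsymbol{K}_i \in \mathbb{R}^{m_i \times m_i}$ be symmetric positive semidefinite, and let $\boldsymbol{C}_i \in \mathbb{R}^{p \times m_i}$ be signed Boolean matrices such that $[\boldsymbol{C}_1 \ \cdots \ \boldsymbol{C}_S]$ has full row rank $p$. Let $0 \leq \gamma \leq 1$ and $\Delta t > 0$, and if $\gamma < 1/2$ assume in addition that $\Delta t \, (1-2\gamma)\, \omega_i^{\max} < 2$ for every $i$, where $\omega_i^{\max}$ is the largest eigenvalue of $\boldsymbol{K}_i \boldsymbol{\phi} = \omega \boldsymbol{M}_i \boldsymbol{\phi}$. Suppose sequences $\boldsymbol{d}_i^{(n)}, \boldsymbol{v}_i^{(n)} \in \mathbb{R}^{m_i}$ and $\boldsymbol{\lambda}^{(n)} \in \mathbb{R}^p$, $n\ge 0$, satisfy (the $\boldsymbol{v}$-continuity method with zero external forcing): for all $n \geq 0$ and all $i$, $\boldsymbol{M}_i \boldsymbol{v}_i^{(n)} + \boldsymbol{K}_i \boldsymbol{d}_i^{(n)} = \boldsymbol{C}_i^{\mathrm{T}} \boldsymbol{\lambda}^{(n)}$ and $\sum_{i=1}^S \boldsymbol{C}_i \boldsymbol{v}_i^{(n)} = \boldsymbol{0}$; and for all $n \geq 1$, $\boldsymbol{d}_i^{(n)} = \boldsymbol{d}_i^{(n-1)} + \Delta t\left((1-\gamma)\boldsymbol{v}_i^{(n-1)} + \gamma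 \boldsymbol{v}_i^{(n)}\right)$. Then the sequences $(\boldsymbol{v}_i^{(n)})_{n}$, $(\boldsymbol{d}_i^{(n+1)} - \boldsymbol{d}_i^{(n)})_{n}$ ($i = 1,\dots,S$) and $(\boldsymbol{\lambda}^{(n+1)} - \boldsymbol{\lambda}^{(n)})_{n}$ are bounded.
   Context: A signed Boolean matrix is a matrix whose entries are in $\{-1,0,+1\}$ and each of whose rows has at most one nonzero entry. A sequence of vectors is bounded if there is a constant $C$ independent of $n$ with $\|\boldsymbol{x}^{(n)}\| < C$ for all $n$. *)

From HB Require Import structures.
From mathcomp Require Import all_boot all_order all_algebra.
From mathcomp Require Import all_classical all_reals all_analysis.
Set Implicit Arguments. Unset Strict Implicit. Unset Printing Implicit Defensive.
Import Order.TTheory GRing.Theory Num.Theory.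
Import numFieldNormedType.Exports.
Local Open Scope ring_scope.

Definition sym_pos_def {R : realType} {n : nat} (A : 'M[R]_n) : Prop :=
  A^T = A /\ forall x : 'cV[R]_n, x != 0 -> 0 < (x^T *m A *m x) ord0 ord0.

Definition sym_pos_semidef {R : realType} {n : nat} (A : 'M[R]_n) : Prop :=
  A^T = A /\ forall x : 'cV[R]_n, 0 <= (x^T *m A *m x) ord0 ord0.

Definition signed_boolean {R : realType} {p m : nat} (C : 'M[R]_(p, m)) : Prop :=
  (forall i j, C i j = 0 \/ C i j = 1 \/ C i j = -1) /\
  (forall i j k, C i j != 0 -> C i k != 0 -> j = k).

Definition gen_eigenvalue {R : realType} {n : nat} (K M : 'M[R]_n) (w : R) : Prop :=
  exists phi : 'cV[R]_n, phi != 0 /\ K *m phi = w *: (M *m phi).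

Definition largest_gen_eigenvalue {R : realType} {n : nat} (K M : 'M[R]_n) (w : R) : Prop :=
  gen_eigenvalue K M w /\ forall w', gen_eigenvalue K M w' -> w' <= w.

(* A sequence of vectors is bounded (w.r.t. the (sup) norm of the normed
   space of matrices; all norms on a finite-dimensional space are equivalent). *)
Definition bounded_seq {R : realType} {n : nat} (x : nat -> 'cV[R]_n) : Prop :=
  exists C : R, forall k, `|x k| < C.

From HB Require Import structures.
From mathcomp Require Import all_boot all_order all_algebra.
From mathcomp Require Import all_classical all_reals all_analysis.
From mathcomp Require Import ring lra.
Import Order.TTheory GRing.Theory Num.Theory.
Import numFieldNormedType.Exports.
Local Open Scope ring_scope.

(* The discrete energy E_n = sum_i v_i^T M_i v_i is nonincreasing.  Testing
   the difference of the equilibrium equations at steps n and n+1 with any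
   family z satisfying the (linear) constraint makes the multipliers drop out;
   the choices z = (1 - gamma) v^(n) + gamma v^(n+1) and z = v^(n+1) - v^(n)
   write E_(n+1) - E_n as -2 dt sum_i z_i^T K_i z_i plus (1 - 2 gamma) times
   a quadratic form in v^(n+1) - v^(n).  For gamma < 1/2 that term is
   controlled through the Rayleigh quotient, whose maximum is the largest
   generalized eigenvalue.
   Bounded energy bounds v and hence d^(n+1) - d^(n); then
   C_i^T (lam^(n+1) - lam^(n)) = M_i (v^(n+1) - v^(n)) + K_i (d^(n+1) - d^(n))
   is bounded, and full row rank of [C_1 ... C_S] bounds lam^(n+1) - lam^(n). *)

Section matrix_norm.
Context {R : realType}.

Lemma mx_norm_entry_le {a b} (x : 'M[R]_(a, b)) i j : `|x i j| <= `|x|.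
Proof.
by rewrite [leRHS]/Num.norm /= mx_normrE; apply/bigmax_geP; right; exists (i, j).
Qed.

Lemma mx_norm_le {a b} (x : 'M[R]_(a, b)) c :
  0 <= c -> (forall i j, `|x i j| <= c) -> `|x| <= c.
Proof.
move=> c_ge0 xc; rewrite [leLHS]/Num.norm /= mx_normrE.
by apply/bigmax_leP; split => // -[i j] _; exact: xc.
Qed.

Lemma mx_norm_tr {a b} (x : 'M[R]_(a, b)) : `|x^T| = `|x|.
Proof.
apply/eqP; rewrite eq_le; apply/andP; split; apply: mx_norm_le => // i j.
  by rewrite mxE; exact: mx_norm_entry_le.
have -> : x i j = x^T j i by rewrite mxE.
exact: mx_norm_entry_le.
Qed.

Lemma mx_norm_mulmx_le {a b c} (A : 'M[R]_(a, b)) (x : 'M[R]_(b, c)) :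
  `|A *m x| <= b%:R * (`|A| * `|x|).
Proof.
apply: mx_norm_le => [|i j]; first by rewrite !mulr_ge0.
rewrite mxE; apply: le_trans (ler_norm_sum _ _ _) _.
have -> : b%:R * (`|A| * `|x|) = \sum_(k < b) `|A| * `|x|.
  by rewrite sumr_const card_ord mulr_natl.
by apply: ler_sum => k _; rewrite normrM ler_pM ?mx_norm_entry_le.
Qed.

End matrix_norm.

Section bounded_seq.
Context {R : realType}.

Lemma bounded_seqP {n} (x : nat -> 'cV[R]_n) :
  bounded_seq x <-> exists c, forall k, `|x k| <= c.
Proof.
split=> [[c xc]|[c xc]]; first by exists c => k; exact: ltW.
by exists (c + 1) => k; rewrite (le_lt_trans (xc k)) ?ltrDl.
Qed.

Lemma bounded_seqD {n} (x y : nat -> 'cV[R]_n) :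
  bounded_seq x -> bounded_seq y -> bounded_seq (fun k => x k + y k).
Proof.
move=> /bounded_seqP[c xc] /bounded_seqP[e ye]; apply/bounded_seqP.
by exists (c + e) => k; rewrite (le_trans (ler_normD _ _)) ?lerD.
Qed.

Lemma bounded_seqZ {n} (l : R) (x : nat -> 'cV[R]_n) :
  bounded_seq x -> bounded_seq (fun k => l *: x k).
Proof.
move=> /bounded_seqP[c xc]; apply/bounded_seqP.
by exists (`|l| * c) => k; rewrite normrZ ler_wpM2l.
Qed.

Lemma bounded_seqB {n} (x y : nat -> 'cV[R]_n) :
  bounded_seq x -> bounded_seq y -> bounded_seq (fun k => x k - y k).
Proof.
move=> bx /(bounded_seqZ (-1)) bNy; apply: bounded_seqD bx _.
by under eq_fun do rewrite -scaleN1r.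
Qed.

Lemma bounded_seq_shift {n} (x : nat -> 'cV[R]_n) :
  bounded_seq x -> bounded_seq (fun k => x k.+1).
Proof. by move=> [c xc]; exists c. Qed.

Lemma bounded_seq_mulmx {n} p (A : 'M[R]_(p, n)) (x : nat -> 'cV[R]_n) :
  bounded_seq x -> bounded_seq (fun k => A *m x k).
Proof.
move=> /bounded_seqP[c xc]; apply/bounded_seqP; exists (n%:R * (`|A| * c)) => k.
by rewrite (le_trans (mx_norm_mulmx_le _ _)) // ler_wpM2l // ler_wpM2l.
Qed.

Lemma bounded_seq_sum {n} (I : Type) (r : seq I) (x : I -> nat -> 'cV[R]_n) :
  (forall i, bounded_seq (x i)) -> bounded_seq (fun k => \sum_(i <- r) x i k).
Proof.
move=> bx; elim: r => [|i r IH].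
  by under eq_fun do rewrite big_nil; exists 1 => k; rewrite normr0.
by under eq_fun do rewrite big_cons; exact: bounded_seqD.
Qed.

End bounded_seq.

Section quadratic_forms.
Context {R : realType}.

Definition bform {n} (A : 'M[R]_n) (x y : 'cV[R]_n) : R := (x^T *m A *m y) ord0 ord0.

Definition qform {n} (A : 'M[R]_n) (x : 'cV[R]_n) : R := bform A x x.

Lemma bformDl {n} (A : 'M[R]_n) x y z : bform A (x + y) z = bform A x z + bform A y z.
Proof. by rewrite /bform linearD /= !mulmxDl mxE. Qed.

Lemma bformDr {n} (A : 'M[R]_n) x y z : bform A z (x + y) = bform A z x + bform A z y.
Proof. by rewrite /bform mulmxDr mxE. Qed.

Lemma bformZl {n} (A : 'M[R]_n) c x y : bform A (c *: x) y = c * bform A x y.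
Proof. by rewrite /bform linearZ /= -!scalemxAl mxE. Qed.

Lemma bformZr {n} (A : 'M[R]_n) c x y : bform A x (c *: y) = c * bform A x y.
Proof. by rewrite /bform -scalemxAr mxE. Qed.

Lemma bform_sym {n} (A : 'M[R]_n) x y : A^T = A -> bform A x y = bform A y x.
Proof.
move=> symA; rewrite /bform.
have -> : (x^T *m A *m y) ord0 ord0 = (x^T *m A *m y)^T ord0 ord0 by rewrite [RHS]mxE.
by rewrite !trmx_mul trmxK symA mulmxA.
Qed.

Lemma qform0 {n} (A : 'M[R]_n) : qform A 0 = 0.
Proof. by rewrite /qform /bform trmx0 !mul0mx mxE. Qed.

Lemma qformZ {n} (A : 'M[R]_n) c x : qform A (c *: x) = c ^+ 2 * qform A x.
Proof. by rewrite /qform bformZl bformZr mulrA -expr2. Qed.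

Lemma qformBZ {n} (A B : 'M[R]_n) c x :
  qform (A - c *: B) x = qform A x - c * qform B x.
Proof.
rewrite /qform /bform mulmxBr mulmxBl -scalemxAr -scalemxAl.
by rewrite [LHS]mxE [X in _ + X]mxE [X in - X]mxE.
Qed.

Lemma qformD_scale {n} (A : 'M[R]_n) x y t : A^T = A ->
  qform A (x + t *: y) = qform A x + 2 * t * bform A x y + t ^+ 2 * qform A y.
Proof.
move=> symA; rewrite /qform !(bformDl, bformDr, bformZl, bformZr).
rewrite (bform_sym A y x symA).
by rewrite expr2; ring.
Qed.

Lemma sym_pos_def_semidef {n} {M : 'M[R]_n} : sym_pos_def M -> sym_pos_semidef M.
Proof.
move=> [symM posM]; split=> // x; have [->|x_neq0] := eqVneq x 0.
  by rewrite trmx0 !mul0mx mxE.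
exact/ltW/posM.
Qed.

End quadratic_forms.

Section rayleigh.
Context {R : realType}.

Lemma continuous_sum (T : topologicalType) (I : Type) (r : seq I) (f : I -> T -> R) :
  (forall i, continuous (f i)) -> continuous (fun y => \sum_(i <- r) f i y).
Proof.
move=> cf; elim: r => [|i r IH].
  by under eq_fun do rewrite big_nil; exact: cst_continuous.
under eq_fun do rewrite big_cons.
by move=> y; exact: (continuousD (cf i y) (IH y)).
Qed.

Lemma qform_continuous {n} (A : 'M[R]_n) :
  continuous (fun y : 'rV[R]_n => qform A y^T).
Proof.
have -> : (fun y : 'rV[R]_n => qform A y^T) =
    (fun y => \sum_(j < n) (\sum_(i < n) y ord0 i * A i j) * y ord0 j).
  apply: funext => y; rewrite /qform /bform trmxK mxE; apply: eq_bigr => j _.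
  by rewrite !mxE; congr (_ * _); apply: eq_bigr => i _; rewrite mxE.
apply: continuous_sum => j y; apply: continuousM; last exact: coord_continuous.
apply: continuous_sum => i z; apply: continuousM; first exact: coord_continuous.
exact: cst_continuous.
Qed.

Definition unit_sphere n : set 'rV[R]_n := [set y | `|y| = 1].

Lemma unit_sphere_compact n : compact (unit_sphere n).
Proof.
apply: bounded_closed_compact.
  by exists 1; split => // c c_gt1 y y1; rewrite /= y1; exact: ltW.
have -> : unit_sphere n = preimage (fun y => `|y|) [set 1] by [].
by apply: preimage_closed; [move=> y _; exact: norm_continuous | exact: closed_eq].
Qed.

Lemma unit_sphere_normalize {n} (x : 'cV[R]_n) :
  x != 0 -> unit_sphere n (`|x|^-1 *: x)^T.
Proof.
move=> x_neq0; rewrite /unit_sphere /= mx_norm_tr normrZ normfV normr_id mulVf //.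
by rewrite normr_eq0.
Qed.

Lemma unit_sphere_neq0 {n} (y : 'rV[R]_n) : unit_sphere n y -> y^T != 0.
Proof.
rewrite /unit_sphere /= -mx_norm_tr => y1; apply/eqP => y0.
by move: y1; rewrite y0 normr0 => /eqP; rewrite eq_sym oner_eq0.
Qed.

Lemma qform_normalize {n} (A : 'M[R]_n) x :
  x != 0 -> qform A x = `|x| ^+ 2 * qform A (`|x|^-1 *: x).
Proof.
move=> x_neq0; rewrite qformZ mulrA -exprMn mulfV ?expr1n ?mul1r //.
by rewrite normr_eq0.
Qed.

(* The Rayleigh quotient [qform K x / qform M x] is scale invariant, so it
   attains its maximum on the compact unit sphere. *)
Lemma rayleigh_quotient_max {n} (K M : 'M[R]_n) {x1 : 'cV[R]_n} :
  (forall x, x != 0 -> 0 < qform M x) -> x1 != 0 ->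
  exists2 x0, x0 != 0 & forall x, qform K x <= qform K x0 / qform M x0 * qform M x.
Proof.
move=> posM x1_neq0.
pose F y := qform K y^T / qform M y^T.
have cF : {within unit_sphere n, continuous F}%classic.
  apply: continuous_in_subspaceT => y /set_mem /unit_sphere_neq0 /posM /lt0r_neq0 My.
  exact: (continuousM (qform_continuous K y)
    (@continuousV _ _ (fun y => qform M y^T) y My (qform_continuous M y))).
have [|y0 /set_mem y0S F_le] := compact_EVT_max _ (unit_sphere_compact n) cF.
  by exists (`|x1|^-1 *: x1)^T; exact: unit_sphere_normalize x1 x1_neq0.
exists y0^T => [|x]; first exact: unit_sphere_neq0.
have [->|x_neq0] := eqVneq x 0; first by rewrite !qform0 mulr0.
have := F_le _ (mem_set (unit_sphere_normalize x x_neq0)).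
rewrite /F trmxK (qform_normalize K x x_neq0) (qform_normalize M x x_neq0).
have u_neq0 : `|x|^-1 *: x != 0.
  by rewrite scaler_eq0 negb_or x_neq0 andbT invr_eq0 normr_eq0.
by rewrite ler_pdivrMr ?posM // => Ku; rewrite mulrCA ler_wpM2l ?sqr_ge0.
Qed.

End rayleigh.

Section generalized_eigenvalues.
Context {R : realType}.

(* Moving [x0] in the direction [G x0] would make [qform G] positive. *)
Lemma qform_nonpos_kernel {n} (G : 'M[R]_n) x0 :
  G^T = G -> (forall x, qform G x <= 0) -> qform G x0 = 0 -> G *m x0 = 0.
Proof.
move=> symG G_le0 Gx0; set r := G *m x0; set s := (r^T *m r) ord0 ord0.
have sE : s = \sum_i r i ord0 ^+ 2.
  by rewrite /s mxE; apply: eq_bigr => i _; rewrite mxE expr2.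
have s_ge0 : 0 <= s by rewrite sE sumr_ge0 // => i _; exact: sqr_ge0.
have x0r : bform G x0 r = s by rewrite /bform /s /r trmx_mul symG.
set g := qform G r; have g_le0 : g <= 0 := G_le0 r.
set t := s / (1 - g).
have t_ge0 : 0 <= t by rewrite divr_ge0 ?subr_ge0 // (le_trans g_le0).
have tg : t * (1 - g) = s by rewrite divfK // gt_eqF // subr_gt0 (le_lt_trans g_le0).
have := G_le0 (x0 + t *: r); rewrite qformD_scale // Gx0 x0r -/g => ler0.
have s0 : s = 0 by nra.
apply/matrixP => i j; rewrite (ord1 j) [RHS]mxE; apply/eqP; rewrite -sqrf_eq0.
by apply/eqP; move: s0; rewrite sE => /psumr_eq0P -> // k _; exact: sqr_ge0.
Qed.

Lemma largest_gen_eigenvalue_rayleigh {n} {K M : 'M[R]_n} {x0 w} :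
  sym_pos_def M -> K^T = K -> (forall x, qform K x <= w * qform M x) ->
  x0 != 0 -> qform K x0 = w * qform M x0 -> largest_gen_eigenvalue K M w.
Proof.
move=> [symM posM] symK Kw x0_neq0 Kx0; split.
  exists x0; split => //; apply/eqP; rewrite -subr_eq0 scalemxAl -mulmxBl.
  apply/eqP/qform_nonpos_kernel.
  - by rewrite linearB /= linearZ /= symK symM.
  - by move=> x; rewrite qformBZ subr_le0.
  - by rewrite qformBZ Kx0 subrr.
move=> w' [phi [phi_neq0 Kphi]].
have Kphi' : qform K phi = w' * qform M phi.
  by rewrite /qform /bform -!mulmxA Kphi -scalemxAr mxE.
by have := Kw phi; rewrite Kphi' ler_pM2r ?posM.
Qed.

Lemma sqr_mx_norm_le_qform1 {n} (x : 'cV[R]_n) : `|x| ^+ 2 <= qform 1%:M x.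
Proof.
have -> : qform 1%:M x = \sum_i x i ord0 ^+ 2.
  by rewrite /qform /bform mulmx1 mxE; apply: eq_bigr => i _; rewrite mxE expr2.
have [x0|/mx_norm_neq0 [[i j] xij]] := eqVneq (mx_norm x) 0.
  by rewrite [`|x|]x0 expr0n sumr_ge0 // => i _; exact: sqr_ge0.
rewrite [`|x|]xij (ord1 j) /= real_normK ?num_real //.
by rewrite (bigD1 i) //= lerDl sumr_ge0 // => k _; exact: sqr_ge0.
Qed.

Lemma sym_pos_def_coercive {n} {M : 'M[R]_n} :
  sym_pos_def M -> exists c, forall x, `|x| ^+ 2 <= c * qform M x.
Proof.
move=> [_ posM].
have [[x1 x1_neq0]|] := pselect (exists x : 'cV[R]_n, x != 0); last first.
  move=> all0; exists 0 => x; rewrite mul0r.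
  by have [->|x_neq0] := eqVneq x 0; [rewrite normr0 expr0n | case: all0; exists x].
have [x0 _ max0] := rayleigh_quotient_max 1%:M M posM x1_neq0.
by eexists => x; apply: le_trans (sqr_mx_norm_le_qform1 x) (max0 x).
Qed.

Lemma qform_le_largest_gen_eigenvalue {n} (K M : 'M[R]_n) (c : R) :
  sym_pos_def M -> K^T = K -> 0 <= c ->
  (forall w, largest_gen_eigenvalue K M w -> c * w < 2) ->
  forall x, c * qform K x <= 2 * qform M x.
Proof.
move=> M_spd symK c_ge0 cw x; have [x_eq0|x_neq0] := eqVneq x 0.
  by rewrite x_eq0 !qform0 !mulr0.
have [x0 x0_neq0 max0] := rayleigh_quotient_max K M M_spd.2 x_neq0.
have /cw cw2 : largest_gen_eigenvalue K M (qform K x0 / qform M x0).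
  apply: (largest_gen_eigenvalue_rayleigh M_spd symK max0 x0_neq0).
  by rewrite divfK // lt0r_neq0 // M_spd.2.
apply: le_trans (ler_wpM2l c_ge0 (max0 x)) _.
by rewrite mulrA; apply: ler_wpM2r (ltW cw2); exact: (sym_pos_def_semidef M_spd).2.
Qed.

End generalized_eigenvalues.

Section theta_method.
Context {R : realType}.

Lemma qform_theta_step {n} {M : 'M[R]_n} {g : R} {a b z} : M^T = M ->
  z = (1 - g) *: a + g *: b ->
  qform M b - qform M a = 2 * bform M z (b - a) + (1 - 2 * g) * qform M (b - a).
Proof.
move=> symM ->; have -> : (1 - g) *: a + g *: b = a + g *: (b - a).
  by apply/matrixP => i j; rewrite !mxE; ring.
have {1}-> : b = a + 1 *: (b - a) by rewrite scale1r addrC subrK.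
by rewrite qformD_scale // bformDl bformZl /qform; ring.
Qed.

(* Expand [0 <= qform K (z + r *: e)] and absorb the [r^2] term. *)
Lemma theta_dissipation {n} {K : 'M[R]_n} {r dt P : R} {e} z :
  sym_pos_semidef K -> 0 < r -> 0 < dt -> dt * r * qform K e <= P ->
  0 <= dt * qform K z + r * P + 2 * r * dt * bform K e z.
Proof.
move=> [symK psdK] r_gt0 dt_gt0 KP.
have : 0 <= qform K (z + r *: e) := psdK _.
rewrite qformD_scale // (bform_sym K z e symK).
have : r * (dt * r * qform K e) <= r * P by rewrite ler_wpM2l // ltW.
nra.
Qed.

Lemma theta_block_le {n} (M K : 'M[R]_n) (g dt : R) a b z :
  sym_pos_semidef M -> sym_pos_semidef K -> 0 < dt ->
  (g < 1/2 -> forall x, dt * (1 - 2 * g) * qform K x <= 2 * qform M x) ->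
  z = (1 - g) *: a + g *: b ->
  qform M b - qform M a <= 2 * (bform M z (b - a) + dt * qform K z)
    + (if g < 1/2 then 2 * (1 - 2 * g) else 0)
      * (qform M (b - a) + dt * bform K (b - a) z).
Proof.
move=> M_spsd K_spsd dt_gt0 stable hz.
rewrite (qform_theta_step M_spsd.1 hz).
have P_ge0 : 0 <= qform M (b - a) := M_spsd.2 (b - a).
have Q_ge0 : 0 <= qform K z := K_spsd.2 z.
case: ltP => g_lt; last first.
  have : 0 <= (2 * g - 1) * qform M (b - a) by rewrite mulr_ge0 //; lra.
  have : 0 <= dt * qform K z by rewrite mulr_ge0 // ltW.
  lra.
have r_gt0 : 0 < 1/2 - g by rewrite subr_gt0.
have KP : dt * (1/2 - g) * qform K (b - a) <= qform M (b - a).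
  by have := stable g_lt (b - a); lra.
have := theta_dissipation z K_spsd r_gt0 dt_gt0 KP; lra.
Qed.

End theta_method.

Section block_matrices.
Context {R : realType} {S p : nat} {m : 'I_S -> nat}.
Variable C : forall i, 'M[R]_(p, m i).

Lemma sum_mulmx_eq0_orthogonal (z : forall i, 'cV[R]_(m i)) (mu : 'cV[R]_p) :
  \sum_i C i *m z i = 0 -> \sum_i ((z i)^T *m ((C i)^T *m mu)) ord0 ord0 = 0.
Proof.
move=> Cz0; under eq_bigr do rewrite mulmxA -trmx_mul.
by rewrite -summxE -mulmx_suml -linear_sum Cz0 linear0 mul0mx mxE.
Qed.

Lemma mxrow_rank_left_inverse : \rank (\mxrow_(i < S) C i) = p ->
  exists P : forall i, 'M[R]_(p, m i),
    forall x : 'cV[R]_p, x = \sum_i P i *m ((C i)^T *m x).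
Proof.
set A := \mxrow_(i < S) C i => rankA.
exists (fun i => (submxcol (pinvmx A) i)^T) => x.
have AA : x^T *m A *m pinvmx A = x^T.
  have freeA : row_free A by rewrite /row_free rankA.
  by apply: (row_free_inj freeA); rewrite mulmxKpV // submxMl.
rewrite -[LHS]trmxK -AA.
have -> : x^T *m A *m pinvmx A = \sum_i x^T *m C i *m submxcol (pinvmx A) i.
  by rewrite -{1}[pinvmx A]submxcolK mul_mxrow mul_mxrow_mxcol.
rewrite linear_sum /=; apply: eq_bigr => i _.
by rewrite !trmx_mul trmxK.
Qed.

End block_matrices.

Section v_continuity.
Context {R : realType} {S p : nat} {m : 'I_S -> nat}.
Context {M K : forall i, 'M[R]_(m i)} {C : forall i, 'M[R]_(p, m i)}.
Context {gamma dt : R} {d v : forall i, nat -> 'cV[R]_(m i)}.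
Context {lam : nat -> 'cV[R]_p}.
Hypothesis M_spd : forall i, sym_pos_def (M i).
Hypothesis K_spsd : forall i, sym_pos_semidef (K i).
Hypothesis dt_gt0 : 0 < dt.
Hypothesis stable : gamma < 1/2 ->
  forall i x, dt * (1 - 2 * gamma) * qform (K i) x <= 2 * qform (M i) x.
Hypothesis equilibrium : forall n i, M i *m v i n + K i *m d i n = (C i)^T *m lam n.
Hypothesis constraint : forall n, \sum_i C i *m v i n = 0.
Hypothesis update :
  forall n i, d i n.+1 = d i n + dt *: ((1 - gamma) *: v i n + gamma *: v i n.+1).

Definition vmid i n := (1 - gamma) *: v i n + gamma *: v i n.+1.

Definition energy n := \sum_i qform (M i) (v i n).

Lemma d_increment i n : d i n.+1 - d i n = dt *: vmid i n.
Proof. by rewrite update addrAC subrr add0r. Qed.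

Lemma lam_increment i n : (C i)^T *m (lam n.+1 - lam n) =
  M i *m (v i n.+1 - v i n) + dt *: (K i *m vmid i n).
Proof.
by rewrite scalemxAr -d_increment mulmxBr -!equilibrium !mulmxBr opprD addrACA.
Qed.

Lemma power_balance n {z : forall i, 'cV[R]_(m i)} : \sum_i C i *m z i = 0 ->
  \sum_i (bform (M i) (z i) (v i n.+1 - v i n)
          + dt * bform (K i) (z i) (vmid i n)) = 0.
Proof.
move=> zC; rewrite -[RHS](sum_mulmx_eq0_orthogonal C z (lam n.+1 - lam n) zC).
apply: eq_bigr => i _.
rewrite lam_increment mulmxDr -scalemxAr /bform !mulmxA [RHS]mxE.
by congr (_ + _); rewrite [RHS]mxE.
Qed.

Lemma energy_nonincreasing n : energy n.+1 <= energy n.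
Proof.
pose c := if gamma < 1/2 then 2 * (1 - 2 * gamma) else 0.
have vmid_constraint : \sum_i C i *m vmid i n = 0.
  under eq_bigr do rewrite mulmxDr -!scalemxAr.
  by rewrite big_split /= -!scaler_sumr !constraint !scaler0 addr0.
have dv_constraint : \sum_i C i *m (v i n.+1 - v i n) = 0.
  by under eq_bigr do rewrite mulmxBr; rewrite sumrB !constraint subrr.
rewrite -subr_le0 /energy -sumrB.
apply: le_trans (_ : \sum_i (2 * (bform (M i) (vmid i n) (v i n.+1 - v i n)
      + dt * qform (K i) (vmid i n)) + c * (qform (M i) (v i n.+1 - v i n)
      + dt * bform (K i) (v i n.+1 - v i n) (vmid i n))) <= 0).
  apply: ler_sum => i _; apply: theta_block_le => //.
    exact: sym_pos_def_semidef.
  by move=> /stable; apply.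
rewrite big_split /= -!mulr_sumr (power_balance n vmid_constraint).
by rewrite (power_balance n dv_constraint) !mulr0 addr0.
Qed.

Lemma energy_le_initial n : energy n <= energy 0.
Proof. by elim: n => // n IH; exact: le_trans (energy_nonincreasing n) IH. Qed.

Lemma v_bounded i : bounded_seq (v i).
Proof.
have [c coerc] := sym_pos_def_coercive (M_spd i).
have qform_ge0 j x : 0 <= qform (M j) x := (sym_pos_def_semidef (M_spd j)).2 x.
apply/bounded_seqP; exists (1 + `|c| * energy 0) => n.
have vE : `|v i n| ^+ 2 <= `|c| * energy 0.
  apply: le_trans (coerc _) _.
  apply: le_trans (ler_wpM2r (qform_ge0 i _) (ler_norm c)) _.
  apply: ler_wpM2l => //; apply: le_trans (energy_le_initial n).
  by rewrite /energy (bigD1 i) //= lerDl sumr_ge0.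
have := normr_ge0 (v i n); nra.
Qed.

Lemma d_increment_bounded i : bounded_seq (fun n => d i n.+1 - d i n).
Proof.
under eq_fun do rewrite d_increment.
apply/bounded_seqZ/bounded_seqD; apply: bounded_seqZ; first exact: v_bounded.
exact: bounded_seq_shift (v_bounded i).
Qed.

Lemma lam_increment_bounded :
  \rank (\mxrow_(i < S) C i) = p -> bounded_seq (fun n => lam n.+1 - lam n).
Proof.
move=> /mxrow_rank_left_inverse [P PC].
have -> : (fun n => lam n.+1 - lam n) =
    (fun n => \sum_i P i *m ((C i)^T *m (lam n.+1 - lam n))).
  by apply: funext => n; exact: PC.
apply: bounded_seq_sum => i; apply: bounded_seq_mulmx.
under eq_fun do rewrite lam_increment.
apply: bounded_seqD; under eq_fun do rewrite ?scalemxAr -?d_increment.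
  exact/bounded_seq_mulmx/bounded_seqB/v_bounded/bounded_seq_shift/v_bounded.
exact/bounded_seq_mulmx/d_increment_bounded.
Qed.

End v_continuity.

Theorem mainTheorem4 (R : realType) (S p : nat) (m : 'I_S -> nat)
  (M K : forall i : 'I_S, 'M[R]_(m i))
  (C : forall i : 'I_S, 'M[R]_(p, m i))
  (gamma dt : R)
  (d v : forall i : 'I_S, nat -> 'cV[R]_(m i))
  (lam : nat -> 'cV[R]_p) :
  (0 < S)%N ->
  (forall i, sym_pos_def (M i)) ->
  (forall i, sym_pos_semidef (K i)) ->
  (forall i, signed_boolean (C i)) ->
  \rank (\mxrow_(i < S) C i) = p ->
  0 <= gamma -> gamma <= 1 -> 0 < dt ->
  (gamma < 1 / 2 ->
     forall i w, largest_gen_eigenvalue (K i) (M i) w ->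
       dt * (1 - 2 * gamma) * w < 2) ->
  (forall n i, M i *m v i n + K i *m d i n = (C i)^T *m lam n) ->
  (forall n, \sum_(i < S) C i *m v i n = 0) ->
  (forall n i, d i n.+1 = d i n + dt *: ((1 - gamma) *: v i n + gamma *: v i n.+1)) ->
  (forall i, bounded_seq (v i)) /\
  (forall i, bounded_seq (fun n => d i n.+1 - d i n)) /\
  bounded_seq (fun n => lam n.+1 - lam n).
Proof.
move=> _ M_spd K_spsd _ rankC _ _ dt_gt0 eigen_cond equilibrium constraint update.
have stable : gamma < 1/2 ->
    forall i x, dt * (1 - 2 * gamma) * qform (K i) x <= 2 * qform (M i) x.
  move=> gamma_lt i.
  apply: qform_le_largest_gen_eigenvalue (M_spd i) (K_spsd i).1 _ _.
    by rewrite mulr_ge0 ?ltW //; lra.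
  exact: eigen_cond.
split; [|split].
- exact: v_bounded M_spd K_spsd dt_gt0 stable equilibrium constraint update.
- exact: d_increment_bounded M_spd K_spsd dt_gt0 stable equilibrium constraint
    update.
- exact: lam_increment_bounded M_spd K_spsd dt_gt0 stable equilibrium
    constraint update rankC.
Qed.
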